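(* Let $q$ be a prime power and let $M=(m_{ij})$ be a $2\times 2$ matrix over $\mathbb{F}_{q^2}$ with $m_{21}\neq 0$ and $m_{12}\neq 0$. Then: (i) $\sharp(\mathrm{Num}'_0(M))\ge\lceil (q+1)/2\rceil$; (ii) if $(-m_{12}/m_{21})^{q+1}\neq 1$, then $\sharp(\mathrm{Num}'_0(M))\ge q+1$.
   Context: The Hermitian form on $\mathbb{F}_{q^2}^n$ is $\langle u,v\rangle=\sum_i u_i^q v_i$. For an $n\times n$ matrix $M$ over $\mathbb{F}_{q^2}$ with $n\ge 2$, $\mathrm{Num}'_0(M)=\{\langle u,Mu\rangle: u\in\mathbb{F}_{q^2}^n\setminus\{0\},\ \langle u,u\rangle=0\}$. *)

From HB Require Import structures.
From mathcomp Require Import all_boot all_order all_algebra all_field.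
Set Implicit Arguments. Unset Strict Implicit. Unset Printing Implicit Defensive.
Import GRing.Theory.
Local Open Scope ring_scope.

(* Hermitian form on F^n (F = F_{q^2}): <u,v> = sum_i u_i^q v_i,
   vectors are column vectors 'cV[F]_n. *)
Definition herm (F : finFieldType) (q n : nat) (u v : 'cV[F]_n) : F :=
  \sum_(i < n) (u i 0) ^+ q * v i 0.

Definition Num0' (F : finFieldType) (q n : nat) (M : 'M[F]_n) : {set F} :=
  [set x | [exists u : 'cV[F]_n,
     [&& u != 0, herm q u u == 0 & x == herm q u (M *m u)]]].

Definition prime_power (q : nat) : Prop :=
  exists p k : nat, prime p /\ (0 < k)%N /\ q = (p ^ k)%N.

(* The vectors (1, t) with t ^ (q + 1) = -1 are isotropic, and there are q + 1 such
   slopes t because X ^ (q + 1) + 1 divides X ^ (q ^ 2) - X.  For two such slopes the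
   values f t = <(1, t), M (1, t)> satisfy
     t s (f t - f s) = (t - s) (m12 t s + m21),
   so a value of f is taken by at most two slopes, the second one being forced to be
   -m21 / (m12 t); this gives (i).  Two distinct slopes with m12 t s = -m21 would give
   (-m12 / m21) ^ (q + 1) = (t s) ^ -(q + 1) = 1, so under the hypothesis of (ii) f is
   injective on the q + 1 slopes. *)

From mathcomp Require Import all_boot all_order all_algebra all_field.
From mathcomp Require Import zify ring.

Set Implicit Arguments.
Unset Strict Implicit.
Unset Printing Implicit Defensive.

Import GRing.Theory.
Local Open Scope ring_scope.

Section RootsOfBinomial.

Variables (F : finFieldType) (d k : nat) (c : F).
Hypotheses (dk_card : (d * k)%N = #|F|.-1) (ck1 : c ^+ k = 1).

Lemma dvdp_XnsubC_genPoly : 'X^d - c%:P %| 'X^#|F| - 'X.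
Proof.
have -> : 'X^#|F| - 'X = 'X * ('X^(d * k) - 1) :> {poly F}.
  by rewrite dk_card mulrBr mulr1 -exprS prednK // ltnW // card_finNzRing_gt1.
have -> : 1 = c%:P ^+ k :> {poly F} by rewrite -rmorphXn ck1.
by rewrite exprM subrXX mulrC -mulrA dvdp_mulIl.
Qed.

Lemma card_roots_XnsubC : #|[set x : F | x ^+ d == c]| = d.
Proof.
have d_gt0 : (0 < d)%N.
  case: d dk_card => // /esym; rewrite mul0n.
  by have := card_finNzRing_gt1 F; case: #|F| => [|[]].
have := dvdp_XnsubC_genPoly; rewrite finField_genPoly => /dvdp_prod_XsubC[m eq_prod].
set r := mask m _ in eq_prod.
have r_roots : [set x : F | x ^+ d == c] =i r.
  move=> x; rewrite inE -root_prod_XsubC -(eqp_root eq_prod).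
  by rewrite /root !hornerE subr_eq0.
have size_r : size r = d.
  by have := eqp_size eq_prod; rewrite size_XnsubC // size_prod_XsubC => -[].
rewrite (eq_card r_roots) -size_r; apply/card_uniqP.
exact/mask_uniq/index_enum_uniq.
Qed.

End RootsOfBinomial.

Lemma card_fibers_imset (T U : finType) (f : T -> U) (A : {set T}) (k : nat) :
  (forall x, x \in A -> #|[set y in A | f y == f x]| <= k)%N ->
  (#|A| <= k * #|f @: A|)%N.
Proof.
move=> fib; rewrite -sum1_card (partition_big_imset f) /= mulnC -sum_nat_const.
apply: leq_sum => _ /imsetP[x Ax ->].
by rewrite sum1dep_card; apply: leq_trans (fib x Ax); rewrite subset_leq_card.
Qed.

Lemma sum_ord2 (V : nmodType) (f : 'I_2 -> V) : \sum_(i < 2) f i = f ord0 + f ord_max.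
Proof.
have -> : ord_max = lift ord0 ord0 :> 'I_2 by apply: val_inj.
by rewrite big_ord_recl big_ord1.
Qed.

Lemma signr_pred_sqrt_card (F : finFieldType) (q : nat) :
  #|F| = (q ^ 2)%N -> (-1 : F) ^+ q.-1 = 1.
Proof.
move=> cardF; have [q_odd | q_even] := boolP (odd q).
  by rewrite -signr_odd; case: q q_odd {cardF} => //= n /negbTE ->.
by rewrite -[-1](expf_card (-1 : F)) cardF -signr_odd oddX (negbTE q_even) expr0 expr1n.
Qed.

Section IsotropicSlopes.

Variables (F : finFieldType) (q : nat).

Definition isotropic_slopes : {set F} := [set t | t ^+ q.+1 == -1].

Lemma card_isotropic_slopes : #|F| = (q ^ 2)%N -> #|isotropic_slopes| = q.+1.
Proof.
move=> cardF; apply: (@card_roots_XnsubC _ _ q.-1); last exact: signr_pred_sqrt_card.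
by rewrite cardF; case: q => //= n; lia.
Qed.

Definition slope_vec (t : F) : 'cV[F]_2 := \col_i (if i == ord0 then 1 else t).

Lemma slope_vec_neq0 t : slope_vec t != 0.
Proof. by apply/eqP => /matrixP /(_ ord0 0); rewrite !mxE; apply/eqP/oner_neq0. Qed.

Lemma herm2 (u v : 'cV[F]_2) :
  herm q u v = u ord0 0 ^+ q * v ord0 0 + u ord_max 0 ^+ q * v ord_max 0.
Proof. exact: sum_ord2. Qed.

Lemma herm_slope_vec t : herm q (slope_vec t) (slope_vec t) = 1 + t ^+ q.+1.
Proof. by rewrite herm2 !mxE /= expr1n mulr1 exprSr. Qed.

Variable M : 'M[F]_2.

Lemma herm_slope_vec_mul t :
  herm q (slope_vec t) (M *m slope_vec t) =
  M ord0 ord0 + M ord0 ord_max * t + t ^+ q * (M ord_max ord0 + M ord_max ord_max * t).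
Proof. by rewrite herm2 !mxE !sum_ord2 !mxE /= expr1n mul1r !mulr1. Qed.

Definition slope_num t := herm q (slope_vec t) (M *m slope_vec t).

Lemma slope_num_in_Num0' t : t \in isotropic_slopes -> slope_num t \in Num0' q M.
Proof.
rewrite inE => /eqP Nt; rewrite inE; apply/existsP; exists (slope_vec t).
by rewrite slope_vec_neq0 herm_slope_vec Nt subrr !eqxx.
Qed.

Lemma isotropic_slope_neq0 t : t \in isotropic_slopes -> t != 0.
Proof.
by rewrite inE; apply: contraTneq => ->; rewrite expr0n eq_sym oppr_eq0 oner_eq0.
Qed.

Lemma slope_num_diff t s : t ^+ q.+1 = s ^+ q.+1 ->
  t * s * (slope_num t - slope_num s) =
  (t - s) * (M ord0 ord_max * t * s - t ^+ q.+1 * M ord_max ord0).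
Proof.
rewrite /slope_num !herm_slope_vec_mul !exprS => Nts.
set a := t ^+ q in Nts *; set b := s ^+ q in Nts *.
apply/eqP; rewrite -subr_eq0; apply/eqP.
transitivity ((t * M ord_max ord0 + t * s * M ord_max ord_max) * (t * a - s * b)).
  by ring.
by rewrite Nts subrr mulr0.
Qed.

Lemma slope_num_eq t s :
  t \in isotropic_slopes -> s \in isotropic_slopes -> slope_num t = slope_num s ->
  t = s \/ M ord0 ord_max * t * s + M ord_max ord0 = 0.
Proof.
rewrite !inE => /eqP Nt /eqP Ns eq_ts.
have := slope_num_diff (etrans Nt (esym Ns)).
rewrite eq_ts subrr mulr0 Nt mulN1r opprK => /esym/eqP.
by rewrite mulf_eq0 subr_eq0 => /orP[/eqP|/eqP]; [left|right].
Qed.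

Lemma card_slope_num_fiber : M ord0 ord_max != 0 ->
  {in isotropic_slopes, forall t,
    #|[set s in isotropic_slopes | slope_num s == slope_num t]| <= 2}%N.
Proof.
move=> M01_neq0 t Tt; have Mt_neq0 := mulf_neq0 M01_neq0 (isotropic_slope_neq0 Tt).
apply: (@leq_trans #|[set t; - M ord_max ord0 / (M ord0 ord_max * t)]|).
  apply/subset_leq_card/subsetP => s; rewrite inE => /andP[Ts /eqP eq_st].
  have [->|Mst] := slope_num_eq Ts Tt eq_st; first exact: set21.
  apply/set2P; right; apply: (mulIf Mt_neq0).
  by rewrite divfK // mulrCA mulrA; apply/eqP; rewrite -addr_eq0 Mst.
by rewrite cards2; case: (_ != _).
Qed.

Lemma slope_num_injective : M ord_max ord0 != 0 ->
  (- M ord0 ord_max / M ord_max ord0) ^+ q.+1 != 1 ->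
  {in isotropic_slopes &, injective slope_num}.
Proof.
move=> M10_neq0 Nx t s Tt Ts eq_ts; have [//|Mts] := slope_num_eq Tt Ts eq_ts.
case/eqP: Nx; move: Tt Ts; rewrite !inE => /eqP Nt /eqP Ns.
have x_ts : - M ord0 ord_max / M ord_max ord0 * (t * s) = 1.
  rewrite mulrAC; have -> : - M ord0 ord_max * (t * s) = M ord_max ord0.
    by apply/eqP; rewrite mulNr mulrA eqr_oppLR -addr_eq0 Mts.
  exact: mulfV.
have := congr1 (fun z => z ^+ q.+1) x_ts.
by rewrite /= !exprMn Nt Ns mulrNN !mulr1 expr1n.
Qed.

End IsotropicSlopes.

Theorem proposition4 (F : finFieldType) (q : nat)
  (hq : prime_power q) (hF : #|F| = (q ^ 2)%N)
  (M : 'M[F]_2)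
  (h21 : M ord_max ord0 != 0) (h12 : M ord0 ord_max != 0) :
  ((q + 2) %/ 2 <= #|Num0' q M|)%N /\
  ((- M ord0 ord_max / M ord_max ord0) ^+ q.+1 != 1 ->
     (q.+1 <= #|Num0' q M|)%N).
Proof.
have card_T := card_isotropic_slopes hF.
have le_image : (#|slope_num q M @: isotropic_slopes F q| <= #|Num0' q M|)%N.
  by apply/subset_leq_card/subsetP => _ /imsetP[t Tt ->]; apply: slope_num_in_Num0'.
split=> [|Nx].
  have := card_fibers_imset (card_slope_num_fiber (q := q) h12); lia.
by rewrite (card_in_imset (slope_num_injective h21 Nx)) card_T in le_image.
Qed.
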